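(* Let $\phi$ be a formula of $\mathcal{D}(\mathsf{M})$, $\mathfrak A$ a structure, and $Y\subseteq X$ teams over $\mathfrak A$ (whose domain contains the free variables of $\phi$). If $\mathfrak A\models_X\phi$ then $\mathfrak A\models_Y\phi$.
   Context: All structures are finite. Dependence logic with majority, $\mathcal{D}(\mathsf{M})[\tau]$: formulas over a vocabulary $\tau$ in negation normal form, built from first-order literals (atomic formulas and negated atomic formulas), dependence atoms $=\!(t_1,\dots,t_n)$ ($t_i$ terms) and their negations $\neg=\!(t_1,\dots,t_n)$, using $\wedge$, $\vee$, $\exists x$, $\forall x$ and $\mathsf{M}x$. Free variables are as in first-order logic ($\mathsf{M}x$ binds $x$), and the free variables of $=\!(t_1,\dots,t_n)$ are all variables occurring in $t_1,\dots,t_n$. A team $X$ over a structure $\mathfrak A$ with domain $A$ and with finite variable domain $\mathrm{dom}(X)$ is a set of assignments $s:\mathrm{dom}(X)\to A$. For $F:X\to A$ let $X(F/x)=\{s(F(s)/x): s\in X\}$ and $X(A/x)=\{s(a/x): s\in X, a\in A\}$, where $s(a/x)$ agrees with $s$ except that it maps $x$ to $a$. Satisfaction $\mathfrak A\models_X\phi$ (for teams whose domain contains the free variables of $\phi$): for a first-order literal, every $s\in X$ satisfies it in the usual sense; $\mathfrak A\models_X =\!(t_1,\dots,t_n)$ iff any $s,s'\in X$ giving equal values to $t_1,\dots,t_{n-1}$ give equal values to $t_n$ ($=\!()$ is always true); $\mathfrak A\models_X\neg=\!(t_1,\dots,t_n)$ iff $X=\emptyset$; $\mathfrak A\models_X\psi\wedge\chi$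 iff both hold; $\mathfrak A\models_X\psi\vee\chi$ iff $X=Y\cup Z$ with $\mathfrak A\models_Y\psi$ and $\mathfrak A\models_Z\chi$; $\mathfrak A\models_X\exists x\psi$ iff $\mathfrak A\models_{X(F/x)}\psi$ for some $F:X\to A$; $\mathfrak A\models_X\forall x\psi$ iff $\mathfrak A\models_{X(A/x)}\psi$; $\mathfrak A\models_X\mathsf{M}x\psi$ iff for at least $|A|^{|X|}/2$ many functions $F:X\to A$ we have $\mathfrak A\models_{X(F/x)}\psi$. A sentence $\phi$ is true in $\mathfrak A$ iff $\mathfrak A\models_{\{\emptyset\}}\phi$, where $\{\emptyset\}$ is the team containing only the empty assignment. *)

From mathcomp Require Import all_boot.
Set Implicit Arguments.
Unset Strict Implicit.
Unset Printing Implicit Defensive.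

Section Syntax.
Variables (V : finType) (FS RS : Type) (arF : FS -> nat) (arR : RS -> nat).

Inductive term : Type :=
| tvar of V
| tapp (f : FS) of ('I_(arF f) -> term).

(* Formulas in negation normal form. *)
Inductive formula : Type :=
| fRel (r : RS) of ('I_(arR r) -> term)
| fNRel (r : RS) of ('I_(arR r) -> term)
| fEq of term & term
| fNEq of term & term
| fDep of seq term
| fNDep of seq term
| fAnd of formula & formula
| fOr of formula & formula
| fEx of V & formula
| fAll of V & formula
| fMaj of V & formula.

Fixpoint fv_term (t : term) : {set V} :=
  match t with
  | tvar v => [set v]
  | tapp f args => \bigcup_(i < arF f) fv_term (args i)
  end.

Definition fv_terms (ts : seq term) : {set V} :=
  \bigcup_(t <- ts) fv_term t.

Fixpoint fv (phi : formula) : {set V} :=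
  match phi with
  | fRel r args | fNRel r args => \bigcup_(i < arR r) fv_term (args i)
  | fEq t1 t2 | fNEq t1 t2 => fv_term t1 :|: fv_term t2
  | fDep ts | fNDep ts => fv_terms ts
  | fAnd p q | fOr p q => fv p :|: fv q
  | fEx x p | fAll x p | fMaj x p => fv p :\ x
  end.
End Syntax.

Section Semantics.
Variables (V : finType) (FS RS : Type) (arF : FS -> nat) (arR : RS -> nat).
Variables (A : finType)
  (interpF : forall f : FS, ('I_(arF f) -> A) -> A)
  (interpR : forall r : RS, ('I_(arR r) -> A) -> bool).

(* An assignment with finite variable domain dom(s) = {v | s v != None}. *)
Definition assignment := {ffun V -> option A}.
Definition team := {set assignment}.

Definition is_team (D : {set V}) (X : team) : Prop :=
  forall s, s \in X -> forall v, (s v != None) = (v \in D).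

Definition evals (n : nat) (g : 'I_n -> option A) : option ('I_n -> A) :=
  (if [forall i, g i != None] as b
      return ([forall i, g i != None] = b -> option ('I_n -> A))
   then fun H => Some (fun i =>
          match g i as o return (g i = o -> A) with
          | Some a => fun _ => a
          | None => fun E => False_rect _ (negP (forallP H i) (introT eqP E))
          end erefl)
   else fun _ => None) erefl.

(* Value of a term under an assignment (None if a variable is undefined). *)
Fixpoint eval (s : assignment) (t : term V arF) : option A :=
  match t with
  | tvar v => s v
  | tapp f args => omap (interpF (f:=f)) (evals (fun i => eval s (args i)))
  end.

Definition upd (s : assignment) (x : V) (a : A) : assignment :=
  [ffun v => if v == x then Some a else s v].

(* Functions F : X -> A are finite functions on the subtype of members of X. *)
Definition memb (X : team) := {s : assignment | s \in X}.

Definition supp_team (X : team) (x : V) (F : {ffun memb X -> A}) : team :=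
  [set upd (val p) x (F p) | p : memb X].

Definition dup_team (X : team) (x : V) : team :=
  [set upd s x a | s in X, a in [set: A]].

Definition dep_holds (X : team) (ts : seq (term V arF)) : Prop :=
  match ts with
  | [::] => True
  | t0 :: rest =>
      forall s s', s \in X -> s' \in X ->
        all (fun t => eval s t == eval s' t) (belast t0 rest) ->
        eval s (last t0 rest) = eval s' (last t0 rest)
  end.

Fixpoint sat (X : team) (phi : formula V arF arR) : Prop :=
  match phi with
  | fRel r args => forall s, s \in X ->
      match evals (fun i => eval s (args i)) with
      | Some v => interpR v | None => false end
  | fNRel r args => forall s, s \in X ->
      match evals (fun i => eval s (args i)) with
      | Some v => ~~ interpR v | None => false end
  | fEq t1 t2 => forall s, s \in X ->
      exists a, eval s t1 = Some a /\ eval s t2 = Some a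
  | fNEq t1 t2 => forall s, s \in X ->
      exists a b, eval s t1 = Some a /\ eval s t2 = Some b /\ a <> b
  | fDep ts => dep_holds X ts
  | fNDep _ => X = set0
  | fAnd p q => sat X p /\ sat X q
  | fOr p q => exists Y Z, X = Y :|: Z /\ sat Y p /\ sat Z q
  | fEx x p => exists F : {ffun memb X -> A}, sat (supp_team x F) p
  | fAll x p => sat (dup_team X x) p
  | fMaj x p =>
      exists S : {set {ffun memb X -> A}},
        (forall F, F \in S -> sat (supp_team x F) p) /\
        #|A| ^ #|X| <= 2 * #|S|
  end.
End Semantics.

From mathcomp Require Import all_boot.
Set Implicit Arguments.
Unset Strict Implicit.

(* Literals, dependence atoms and their negations are flat or
   trivially downward closed; for disjunction the splitting X = X1 u X2
   restricts to Y = (Y n X1) u (Y n X2); for the existential a choice function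
   F : X -> A restricts to Y, and Y(F|Y/x) is a subteam of X(F/x); for the
   universal quantifier Y(A/x) is a subteam of X(A/x).
   The majority quantifier needs a counting argument: restriction maps the
   functions X -> A to the functions Y -> A, each fibre having at most
   |A|^|X \ Y| elements, so a family S of at least |A|^|X|/2 good functions on X
   restricts to at least |A|^|Y|/2 good functions on Y.  The empty team, where
   this count degenerates, is handled by the empty team property. *)

Section DownwardClosure.
Variables (V : finType) (FS RS : Type) (arF : FS -> nat) (arR : RS -> nat)
  (A : finType) (interpF : forall f : FS, ('I_(arF f) -> A) -> A)
  (interpR : forall r : RS, ('I_(arR r) -> A) -> bool).

Notation sat := (sat interpF interpR).

Definition lift_memb (X Y : team V A) (H : Y \subset X) (p : memb Y) : memb X :=
  exist _ (val p) (subsetP H _ (valP p)).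

Definition restrict (X Y : team V A) (H : Y \subset X) (F : {ffun memb X -> A}) :
  {ffun memb Y -> A} := [ffun p => F (lift_memb H p)].

Lemma supp_team_restrict (X Y : team V A) (H : Y \subset X) x F :
  supp_team x (restrict H F) \subset supp_team x F.
Proof.
apply/subsetP => s /imsetP [p _ ->]; apply/imsetP; exists (lift_memb H p) => //.
by rewrite ffunE.
Qed.

Lemma dup_team_sub (X Y : team V A) x :
  Y \subset X -> dup_team Y x \subset dup_team X x.
Proof.
move=> H; apply/subsetP => s /imset2P [s' a hs' ha ->].
by apply/imset2P; exists s' a => //; apply: (subsetP H).
Qed.

Lemma card_memb (X : team V A) : #|{: memb X}| = #|X|.
Proof. by rewrite card_sig; apply: eq_card. Qed.

Lemma supp_team_empty x (F : {ffun memb (set0 : team V A) -> A}) :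
  supp_team x F = set0.
Proof.
apply/setP => s; rewrite in_set0; apply/negbTE/negP => /imsetP [[s' h] _ _].
by rewrite in_set0 in h.
Qed.

Lemma dup_team_empty x : dup_team (set0 : team V A) x = set0.
Proof.
apply/setP => s; rewrite in_set0; apply/negbTE/negP => /imset2P [s' a h _ _].
by rewrite in_set0 in h.
Qed.

Lemma sat_empty (phi : formula V arF arR) : sat set0 phi.
Proof.
have card_funs0 : #|{ffun memb (set0 : team V A) -> A}| = 1.
  by rewrite card_ffun card_memb cards0.
elim: phi => /=.
- by move=> r args s; rewrite in_set0.
- by move=> r args s; rewrite in_set0.
- by move=> t1 t2 s; rewrite in_set0.
- by move=> t1 t2 s; rewrite in_set0.
- by case=> //= t0 rest s s'; rewrite in_set0.
- by [].
- by move=> p Hp q Hq.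
- by move=> p Hp q Hq; exists set0, set0; rewrite setU0.
- move=> x p Hp; have /card_gt0P [F _] : 0 < #|{ffun memb (set0 : team V A) -> A}|.
    by rewrite card_funs0.
  by exists F; rewrite supp_team_empty.
- by move=> x p Hp; rewrite dup_team_empty.
- move=> x p Hp; exists setT; split; first by move=> F _; rewrite supp_team_empty.
  by rewrite cardsT card_funs0 cards0.
Qed.

Lemma restrict_pair_inj (X Y : team V A) (H : Y \subset X) :
  injective (fun F => (restrict H F, restrict (subsetDl X Y) F)).
Proof.
move=> F1 F2 [e1 e2]; apply/ffunP => q.
case: (boolP (val q \in Y)) => hq.
  have <- : lift_memb H (exist _ (val q) hq) = q by apply: val_inj.
  by move/ffunP: e1 => /(_ (exist _ (val q) hq)); rewrite !ffunE.
have hq' : val q \in X :\: Y by rewrite inE hq (valP q).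
have <- : lift_memb (subsetDl X Y) (exist _ (val q) hq') = q by apply: val_inj.
by move/ffunP: e2 => /(_ (exist _ (val q) hq')); rewrite !ffunE.
Qed.

Lemma card_restrict_image (X Y : team V A) (H : Y \subset X)
    (S : {set {ffun memb X -> A}}) :
  #|S| <= #|restrict H @: S| * #|A| ^ #|X :\: Y|.
Proof.
rewrite -(card_imset _ (@restrict_pair_inj X Y H)) -card_memb -card_ffun -cardsT.
rewrite -cardsX; apply: subset_leq_card; apply/subsetP => _ /imsetP [F hF ->].
by rewrite in_setX imset_f ?in_setT.
Qed.

Lemma majority_restrict (X Y : team V A) (H : Y \subset X)
    (S : {set {ffun memb X -> A}}) :
  Y != set0 -> #|A| ^ #|X| <= 2 * #|S| -> #|A| ^ #|Y| <= 2 * #|restrict H @: S|.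
Proof.
move=> Yn0 hS; have [A0|Apos] := posnP #|A|.
  by rewrite A0 exp0n // lt0n cards_eq0.
have kpos : 0 < #|A| ^ #|X :\: Y| by rewrite expn_gt0 Apos.
have splitX : #|A| ^ #|X| = #|A| ^ #|Y| * #|A| ^ #|X :\: Y|.
  by rewrite -expnD cardsDS // subnKC // subset_leq_card.
rewrite -(leq_pmul2r kpos) -splitX -mulnA; apply: leq_trans hS _.
by rewrite leq_mul2l card_restrict_image orbT.
Qed.

Lemma sat_downward_closed (phi : formula V arF arR) (X Y : team V A) :
  Y \subset X -> sat X phi -> sat Y phi.
Proof.
(* First-order literals are flat: they hold in X iff in all its members. *)
elim: phi X Y => /=; try by move=> r args X Y H HX s /(subsetP H); apply: HX.
- case=> //= t0 rest X Y H HX s s' /(subsetP H) hs /(subsetP H) hs'.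
  exact: HX.
- by move=> ts X Y H EX; subst X; apply/eqP; rewrite -subset0.
- by move=> p Hp q Hq X Y H [hp hq]; split; [apply: Hp hp | apply: Hq hq].
- move=> p Hp q Hq X Y H [X1 [X2 [EX [h1 h2]]]].
  exists (Y :&: X1), (Y :&: X2); split; first by rewrite -setIUr -EX; apply/esym/setIidPl.
  by split; [apply: Hp h1 | apply: Hq h2]; apply: subsetIr.
- move=> x p Hp X Y H [F hF]; exists (restrict H F).
  exact: Hp (supp_team_restrict H x F) hF.
- by move=> x p Hp X Y H; apply: Hp; apply: dup_team_sub.
- move=> x p Hp X Y H [S [hS hcard]].
  have [->|Yn0] := eqVneq Y set0; first exact: (sat_empty (fMaj x p)).
  exists (restrict H @: S); split; last exact: majority_restrict.
  by move=> _ /imsetP [F hF ->]; apply: Hp (supp_team_restrict H x F) (hS F hF).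
Qed.
End DownwardClosure.

Theorem mainTheorem2 (V : finType) (FS RS : Type) (arF : FS -> nat) (arR : RS -> nat)
  (A : finType) (interpF : forall f : FS, ('I_(arF f) -> A) -> A)
  (interpR : forall r : RS, ('I_(arR r) -> A) -> bool)
  (phi : formula V arF arR) (D : {set V}) (X Y : team V A) :
  is_team D X -> fv phi \subset D -> Y \subset X ->
  sat interpF interpR X phi -> sat interpF interpR Y phi.
Proof. by move=> _ _; apply: sat_downward_closed. Qed.
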